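(* Let $\Delta\geq 2$ be an integer and let $G$ be a connected bipartite graph of maximum degree at most $\Delta$. Then $$\alpha(G)\geq \frac{1}{2}\left(1+\frac{1}{2(\Delta-1)}\right)\mathrm{diss}(G)-\frac{1}{2(\Delta-1)}.$$
   Context: All graphs are finite, simple and undirected. $\alpha(G)$ is the independence number. A set $D$ of vertices is a dissociation set if the induced subgraph $G[D]$ has maximum degree at most $1$; $\mathrm{diss}(G)$ is the maximum order of a dissociation set. *)

From mathcomp Require Import all_boot all_order all_algebra.
Set Implicit Arguments. Unset Strict Implicit. Unset Printing Implicit Defensive.

Definition simple_graph (T : finType) (e : rel T) : Prop :=
  symmetric e /\ irreflexive e.

Definition nbhd (T : finType) (e : rel T) (v : T) : {set T} := [set u | e v u].
Definition deg (T : finType) (e : rel T) (v : T) : nat := #|nbhd e v|.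

Definition max_deg_le (T : finType) (e : rel T) (D : nat) : Prop :=
  forall v : T, deg e v <= D.

Definition connected_graph (T : finType) (e : rel T) : Prop :=
  #|T| > 0 /\ forall x y : T, connect e x y.

Definition bipartite (T : finType) (e : rel T) : Prop :=
  exists c : T -> bool, forall x y, e x y -> c x != c y.

Definition independent (T : finType) (e : rel T) (S : {set T}) : bool :=
  [forall x in S, forall y in S, ~~ e x y].

Definition dissociation (T : finType) (e : rel T) (D : {set T}) : bool :=
  [forall v in D, #|nbhd e v :&: D| <= 1].

Definition alpha (T : finType) (e : rel T) : nat :=
  \max_(S : {set T} | independent e S) #|S|.
Definition diss (T : finType) (e : rel T) : nat :=
  \max_(D : {set T} | dissociation e D) #|D|.

From mathcomp Require Import all_boot all_order all_algebra.
From mathcomp Require Import zify ring.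
Import GRing.Theory Num.Theory.

Set Implicit Arguments.
Unset Strict Implicit.

(* Root a BFS tree of the connected graph at a vertex r of a dissociation
   set D and give every other vertex its parent.  Vertices of
   D \ r whose parent lies in D pair off injectively with their parents
   (a vertex of D has at most one neighbour in D), so at most half of D is
   of that kind; every other vertex of D \ r is one of the at most Delta - 1
   children of a vertex outside D.  Hence |D| <= 2 (Delta - 1) |V \ D| + 2,
   and the two colour classes give |V| <= 2 alpha; combining the two gives
   the bound. *)

Section ParentFunction.

Variables (T : finType) (e : rel T).

Fixpoint ball (r : T) (k : nat) : {set T} :=
  match k with
  | 0 => [set r]
  | k'.+1 => ball r k' :|: [set v | [exists u in ball r k', e u v]]
  end.

Lemma last_path_in_ball (r x : T) (s : seq T) (k : nat) :
  path e x s -> x \in ball r k -> last x s \in ball r (k + size s).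
Proof.
elim: s x k => [|y s IHs] x k /=; first by rewrite addn0.
move=> /andP[exy ys] xk; rewrite addnS -addSn; apply: IHs ys _.
by rewrite !inE; apply/orP; right; apply/exists_inP; exists x.
Qed.

Lemma connect_in_ball (r v : T) : connect e r v -> exists k, v \in ball r k.
Proof.
move=> /connectP[s rs ->]; exists (0 + size s).
by apply: last_path_in_ball rs _; rewrite inE.
Qed.

Hypothesis e_sym : symmetric e.

Lemma exists_parent (r : T) : (forall v, connect e r v) ->
  exists f : T -> nat, exists p : T -> T,
    forall v, v != r -> e v (p v) && (f (p v) < f v).
Proof.
move=> r_connect.
have inball v : exists k, v \in ball r k := connect_in_ball (r_connect v).
pose f v := ex_minn (inball v).
have descend v : v != r -> exists u, e v u && (f u < f v).
  move=> vr; rewrite /f; case: ex_minnP => [[|k]] /=; first by rewrite inE (negbTE vr).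
  rewrite !inE => /orP[vk | /exists_inP[u uk euv]] minv.
    by have := minv _ vk; rewrite ltnn.
  exists u; rewrite e_sym euv /=; case: ex_minnP => m _; exact.
exists f, (fun v => odflt v [pick u | e v u && (f u < f v)]) => v /descend[u vu].
by case: pickP => [w -> // | /(_ u)]; rewrite vu.
Qed.

End ParentFunction.

Section DissociationBound.

Variables (T : finType) (e : rel T) (Delta : nat).
Hypothesis e_sym : symmetric e.
Hypothesis e_max_deg : max_deg_le e Delta.

Variables (r : T) (f : T -> nat) (p : T -> T).
Hypothesis parentP : forall v, v != r -> e v (p v) && (f (p v) < f v).

Lemma parent_parent_neq (v : T) : v != r -> p v != r -> p (p v) != v.
Proof.
move=> vr pvr; apply/eqP => ppv.
have /andP[_ lt1] := parentP vr; have /andP[_ lt2] := parentP pvr.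
by have := ltn_trans lt2 lt1; rewrite ppv ltnn.
Qed.

Lemma card_children_le (u : T) : u != r ->
  #|[set v | (v != r) && (p v == u)]| <= Delta - 1.
Proof.
move=> ur; have /andP[eupu _] := parentP ur.
apply: (@leq_trans #|nbhd e u :\ p u|).
  apply: subset_leq_card; apply/subsetP => v; rewrite !inE => /andP[vr /eqP pvu].
  have /andP[evpv _] := parentP vr.
  have pvr : p v != r by rewrite pvu.
  by rewrite -pvu e_sym evpv andbT eq_sym parent_parent_neq.
by have := e_max_deg u; rewrite /deg (cardsD1 (p u)) inE eupu; lia.
Qed.

Variable D : {set T}.
Hypotheses (D_diss : dissociation e D) (rD : r \in D).

Lemma dissociation_nbr_unique (v a b : T) : v \in D -> a \in D -> b \in D ->
  e v a -> e v b -> a = b.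
Proof.
move=> vD aD bD eva evb; move/forall_inP: D_diss => /(_ v vD) /card_le1_eqP.
by apply; rewrite !inE ?eva ?evb ?aD ?bD.
Qed.

Let X := [set v in D | (v != r) && (p v \in D)].
Let Y := [set v in D | (v != r) && (p v \notin D)].

Lemma card_D_le : #|D| <= #|X| + #|Y| + 1.
Proof.
apply: (@leq_trans #|r |: (X :|: Y)|).
  apply: subset_leq_card; apply/subsetP => v vD; rewrite !inE vD /=.
  by case: (v == r); case: (p v \in D).
by rewrite cardsU1 -(cardsUI X Y); have := leq_b1 (r \notin X :|: Y); lia.
Qed.

Lemma card_X_le : #|X| + #|X| <= #|D|.
Proof.
have XP v : v \in X -> [/\ v \in D, v != r & p v \in D] by rewrite inE => /and3P.
have p_inj : {in X &, injective p}.
  move=> v w /XP[vD vr pvD] /XP[wD wr pwD] pvw.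
  have /andP[evpv _] := parentP vr; have /andP[ewpw _] := parentP wr.
  apply: (dissociation_nbr_unique pvD) => //; first by rewrite e_sym.
  by rewrite pvw e_sym.
have X_pX : X :&: p @: X = set0.
  apply/setP => v; rewrite inE [v \in set0]inE; apply/andP => -[vX /imsetP[w wX vpw]].
  have [vD vr pvD] := XP v vX; have [wD wr pwD] := XP w wX.
  have /andP[evpv _] := parentP vr; have /andP[ewpw _] := parentP wr.
  have wpv : w = p v by apply: (dissociation_nbr_unique vD); rewrite // vpw e_sym.
  have pwr : p w != r by rewrite -vpw.
  by have := parent_parent_neq wr pwr; rewrite -vpw -wpv eqxx.
rewrite -{2}(card_in_imset p_inj) -cardsUI X_pX cards0 addn0.
apply: subset_leq_card; apply/subsetP => v; rewrite inE => /orP[/XP[] // | ].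
by case/imsetP => w /XP[] _ _ pwD ->.
Qed.

Lemma card_Y_le : #|Y| <= (Delta - 1) * #|~: D|.
Proof.
rewrite -sum1_card (partition_big p (mem (~: D))) => [|v]; last first.
  by rewrite !inE => /and3P[].
rewrite mulnC -sum_nat_const; apply: leq_sum => u uD.
have ur : u != r by apply: contraTneq uD => ->; rewrite !inE rD.
rewrite sum1dep_card; apply: leq_trans (card_children_le ur).
by apply: subset_leq_card; apply/subsetP => v; rewrite !inE => /andP[/and3P[_ -> _]].
Qed.

Lemma dissociation_card_le_rooted : #|D| <= 2 * ((Delta - 1) * #|~: D|) + 2.
Proof. by have := card_D_le; have := card_X_le; have := card_Y_le; lia. Qed.

End DissociationBound.

Lemma dissociation_card_le (T : finType) (e : rel T) (Delta : nat) (D : {set T}) :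
  symmetric e -> (forall x y, connect e x y) -> max_deg_le e Delta ->
  dissociation e D -> #|D| <= 2 * ((Delta - 1) * #|~: D|) + 2.
Proof.
move=> e_sym e_conn e_max_deg D_diss.
have [-> | [r rD]] := set_0Vmem D; first by rewrite cards0.
have [f [p parentP]] := exists_parent e_sym (e_conn r).
exact: (dissociation_card_le_rooted e_sym e_max_deg parentP D_diss rD).
Qed.

Lemma independent_color_class (T : finType) (e : rel T) (c : T -> bool) (b : bool) :
  (forall x y, e x y -> c x != c y) -> independent e [set x | c x == b].
Proof.
move=> c_proper; apply/forall_inP => x; rewrite inE => /eqP cx.
apply/forall_inP => y; rewrite inE => /eqP cy.
by apply/negP => /c_proper; rewrite cx cy eqxx.
Qed.

Lemma bipartite_card_le (T : finType) (e : rel T) :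
  bipartite e -> #|T| <= 2 * alpha e.
Proof.
move=> [c c_proper].
have class_le b : #|[set x | c x == b]| <= alpha e.
  exact: (@leq_bigmax_cond _ (independent e) (fun S => #|S|) _ (independent_color_class b c_proper)).
have classC : ~: [set x | c x == true] = [set x | c x == false].
  by apply/setP => x; rewrite !inE; case: (c x).
rewrite -(cardsC [set x | c x == true]) classC.
by have := class_le true; have := class_le false; lia.
Qed.

Lemma diss_attained (T : finType) (e : rel T) :
  exists2 D, dissociation e D & diss e = #|D|.
Proof.
have [|D D_diss diss_eq] := @eq_bigmax_cond _ (dissociation e) (fun D => #|D|).
  by apply/card_gt0P; exists set0; rewrite unfold_in; apply/forall_inP => v; rewrite inE.
by exists D.
Qed.

Local Open Scope ring_scope.

Theorem proposition1 (Delta : nat) (T : finType) (e : rel T) :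
  (2 <= Delta)%N ->
  simple_graph e ->
  connected_graph e ->
  bipartite e ->
  max_deg_le e Delta ->
  (alpha e)%:R >=
    (1 / 2 : rat) * (1 + 1 / (2 * (Delta%:R - 1))) * (diss e)%:R
    - 1 / (2 * (Delta%:R - 1)).
Proof.
move=> Delta_ge2 [e_sym _] [_ e_conn] e_bip e_max_deg.
have [D D_diss diss_eq] := diss_attained e.
have diss_le := dissociation_card_le e_sym e_conn e_max_deg D_diss.
have card_le := bipartite_card_le e_bip.
have card_split := cardsC D.
rewrite -diss_eq in diss_le card_split.
have [d Delta_eq] : exists d, Delta = d.+2 by exists (Delta - 2)%N; lia.
have nat_bound : (2 * d.+1 * diss e + diss e <= 4 * d.+1 * alpha e + 2)%N.
  rewrite Delta_eq in diss_le; nia.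
have -> : (Delta%:R - 1 : rat) = d.+1%:R by rewrite Delta_eq -addn1 natrD addrK.
have -> : (1 / 2 : rat) * (1 + 1 / (2 * d.+1%:R)) * (diss e)%:R - 1 / (2 * d.+1%:R)
        = ((2 * d.+1 * diss e + diss e)%N%:R - 2) / (4 * d.+1)%N%:R.
  by rewrite !natrM natrD; field; rewrite addrC natr1 pnatr_eq0.
rewrite ler_pdivrMr ?ltr0n ?muln_gt0 // lerBlDr -natrM -[2 : rat]/(2%:R) -natrD ler_nat.
lia.
Qed.
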